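(* Let $d$ be a square-free positive integer, let $E=\mathbb{Q}(\sqrt{-d})$ with ring of integers $\mathcal{O}$, let $p$ be a prime number that splits in $E$, and let $\mathfrak{P}_1,\mathfrak{P}_2$ be the prime ideals of $\mathcal{O}$ lying above $p$. For a positive integer $r$ and $j\in\{1,2\}$, let $L_j^r=\mathfrak{P}_jv_j$ be the unary Hermitian lattice in a one-dimensional Hermitian space $Ev_j$ with $h(v_j)=r/p$. Then for every positive integer $r$ and every positive integer $m$, $L_1^r$ is represented by $I_m$ if and only if $L_2^r$ is represented by $I_m$. In particular, the set of positive integers $r$ with $L_1^r\in\mathfrak{S}_d(1)$ equals the set of positive integers $r$ with $L_2^r\in\mathfrak{S}_d(1)$.
   Context: A Hermitian space is a finite-dimensional $E$-vector space $V$ with a map $h:V\times V\to E$ that is $E$-linear in the first argument and satisfies $h(v,w)=\overline{h(w,v)}$; write $h(v)=h(v,v)$. A Hermitian lattice is a finitely generated $\mathcal{O}$-submodule of such a space; unary means the space is one-dimensional. It is positive definite integral if $h(v)\in\mathbb{Z}_{>0}$ for nonzero $v$ and $h(v,w)\in\mathcal{O}$ for all $v,w$ in it (the lattices $L_j^r$ above are positive definite integral). $I_m$ is $\mathcal{O}^m$ with $h(x,y)=\sum_{i=1}^m x_i\overline{y_i}$. A lattice $L$ is represented by $K$ if there is an injective $\mathcal{O}$-linear map $L\to K$ preserving $h$. $\mathfrak{S}_d(1)$ is the set of positive definite integral unary Hermitian lattices over $\mathcal{O}$ represented by $I_m$ for some $m\geq1$. *)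

(* E = Q(sqrt(-d)) realised inside algC. *)
From mathcomp Require Import all_boot all_order all_algebra all_field.
Set Implicit Arguments. Unset Strict Implicit. Unset Printing Implicit Defensive.
Import Order.TTheory GRing.Theory Num.Theory.
Local Open Scope ring_scope.

Definition squarefree (d : nat) : Prop :=
  forall q : nat, prime q -> ~ (q * q %| d)%N.

Definition inE (d : nat) (x : algC) : Prop :=
  exists a b : rat, x = ratr a + ratr b * sqrtC (- (d%:R)).

Definition inO (d : nat) (x : algC) : Prop := inE d x /\ x \in Aint.

Definition ideal_of_O (d : nat) (I : algC -> Prop) : Prop :=
  [/\ forall x, I x -> inO d x,
      I 0,
      forall x y, I x -> I y -> I (x + y)
    & forall a x, inO d a -> I x -> I (a * x)].

Definition prime_ideal_of_O (d : nat) (I : algC -> Prop) : Prop :=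
  [/\ ideal_of_O d I, ~ I 1 &
      forall a b, inO d a -> inO d b -> I (a * b) -> I a \/ I b].

Definition lies_above (d p : nat) (I : algC -> Prop) : Prop :=
  prime_ideal_of_O d I /\ I p%:R.

Definition same_set (I J : algC -> Prop) : Prop := forall x, I x <-> J x.

Definition splits (d p : nat) : Prop :=
  exists I J, [/\ lies_above d p I, lies_above d p J & ~ same_set I J].

(* The unary lattice L = P v with h(v) = r/p is identified with P via x |-> x v;
   then h(x v, y v) = x * y^* * (r/p). *)
Definition hL (p r : nat) (x y : algC) : algC := x * y^* * (r%:R / p%:R).

(* I_m = O^m with the standard Hermitian form *)
Definition hI (m : nat) (u w : 'I_m -> algC) : algC := \sum_(i < m) u i * (w i)^*.

Definition represented_by_I (d p r m : nat) (P : algC -> Prop) : Prop :=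
  exists f : algC -> 'I_m -> algC,
    [/\ forall x, P x -> forall i, inO d (f x i),
        forall a x y, inO d a -> P x -> P y ->
           f (a * x + y) = (fun i => a * f x i + f y i),
        forall x y, P x -> P y -> f x = f y -> x = y
      & forall x y, P x -> P y -> hI (f x) (f y) = hL p r x y].

Definition pos_def_integral (d p r : nat) (P : algC -> Prop) : Prop :=
  (forall x, P x -> x != 0 -> hL p r x x \in Num.nat /\ 0 < hL p r x x) /\
  (forall x y, P x -> P y -> inO d (hL p r x y)).

Definition in_S1 (d p r : nat) (P : algC -> Prop) : Prop :=
  pos_def_integral d p r P /\ exists m, (0 < m)%N /\ represented_by_I d p r m P.

From Pilot Require Import Defs.
From mathcomp Require Import all_boot all_order all_algebra all_field.
From mathcomp Require Import ring.
From Stdlib Require Import Classical FunctionalExtensionality.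
Import Order.TTheory GRing.Theory Num.Theory.
Local Open Scope ring_scope.

(* Every prime P of O above p contains the norm x x^* of each of its elements;
   that norm is a rational integer, hence divisible by p, hence lies in any
   other prime Q above p, so x or x^* lies in Q.  An additive group is never
   the union of two proper subgroups, so P is contained in Q or in its
   conjugate, and the trace x + x^* upgrades the inclusion to an equality.
   Thus the two primes above p are complex conjugate, and conjugating
   coordinatewise transports a representation of P v by I_m to one of
   conj(P) v, the form being preserved because h(v) = r/p is real. *)

Lemma conjC_sqrtC_le0 (x : algC) : x <= 0 -> (sqrtC x)^* = - sqrtC x.
Proof.
move=> x_le0; set s := sqrtC x.
have conj_sq : s^* ^+ 2 = s ^+ 2.
  by rewrite -rmorphXn sqrtCK; apply: conj_Creal; apply: ler0_real.
have /eqP := congr1 (fun t => t - s ^+ 2) conj_sq.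
rewrite subrr subr_sqr mulf_eq0 subr_eq0 addr_eq0 => /orP[/eqP s_real | /eqP //].
have : 0 <= s ^+ 2 by rewrite -realEsqr; apply/CrealP.
rewrite sqrtCK => x_ge0.
have -> : s = 0 by apply/eqP; rewrite sqrtC_eq0 eq_le x_le0.
by rewrite oppr0 conjC0.
Qed.

Section QuadraticField.
Context {d : nat}.

Let s : algC := sqrtC (- d%:R).

Let conj_s : s^* = - s.
Proof. by apply: conjC_sqrtC_le0; rewrite oppr_le0. Qed.

Let conj_inE (a b : rat) : (ratr a + ratr b * s)^* = ratr a - ratr b * s.
Proof. by rewrite rmorphD fmorph_rat rmorphM fmorph_rat /= conj_s mulrN. Qed.

Lemma inE_conj {x : algC} : Defs.inE d x -> Defs.inE d x^*.
Proof. by case=> a [b ->]; exists a, (- b); rewrite conj_inE rmorphN mulNr. Qed.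

Lemma inO_conj {x : algC} : inO d x -> inO d x^*.
Proof. by case=> /inE_conj Ex Ax; split; rewrite // -(Aint_aut Num.conj) in Ax. Qed.

Lemma inO_int (k : int) : inO d k%:~R.
Proof.
split; last exact: Aint_int.
by exists k%:~R, 0; rewrite rmorph0 mul0r addr0 rmorph_int.
Qed.

Lemma inE_trace_rat {x : algC} : Defs.inE d x -> x + x^* \in Crat.
Proof.
case=> a [b ->]; rewrite conj_inE.
have -> : ratr a + ratr b * s + (ratr a - ratr b * s) = ratr (a + a) :> algC.
  by rewrite rmorphD /=; ring.
exact: Crat_rat.
Qed.

Lemma inE_norm_rat {x : algC} : Defs.inE d x -> x * x^* \in Crat.
Proof.
case=> a [b ->]; rewrite conj_inE.
have -> : (ratr a + ratr b * s) * (ratr a - ratr b * s)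
          = ratr (a * a) - ratr (b * b) * s ^+ 2 :> algC.
  by rewrite !rmorphM /=; ring.
by rewrite sqrtCK rpredB ?Crat_rat // rpredM ?Crat_rat // rpredN rpred_nat.
Qed.

Lemma inO_trace_int {x : algC} : inO d x -> x + x^* \in Num.int.
Proof.
move=> Ox; have [Ex Ax] := Ox; have /inO_conj[_ Acx] := Ox.
by apply: Cint_rat_Aint; [exact: inE_trace_rat | exact: rpredD].
Qed.

Lemma inO_norm_int {x : algC} : inO d x -> x * x^* \in Num.int.
Proof.
move=> Ox; have [Ex Ax] := Ox; have /inO_conj[_ Acx] := Ox.
by apply: Cint_rat_Aint; [exact: inE_norm_rat | exact: rpredM].
Qed.

End QuadraticField.

Definition conj_set (P : algC -> Prop) : algC -> Prop := fun x => P x^*.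

Lemma sub_or_of_sub_union {V : zmodType} {P Q R : V -> Prop} :
  (forall x y, P x -> P y -> P (x + y)) ->
  (forall x y, Q x -> Q y -> Q (x - y)) ->
  (forall x y, R x -> R y -> R (x - y)) ->
  (forall x, P x -> Q x \/ R x) ->
  (forall x, P x -> Q x) \/ (forall x, P x -> R x).
Proof.
move=> PD QB RB PQR; apply: NNPP => /not_or_and[notPQ notPR].
have [x nPQx] := not_all_ex_not _ _ notPQ.
have [Px nQx] := imply_to_and _ _ nPQx.
have [y nPRy] := not_all_ex_not _ _ notPR.
have [Py nRy] := imply_to_and _ _ nPRy.
have Rx : R x by case: (PQR x Px).
have Qy : Q y by case: (PQR y Py).
case: (PQR _ (PD x y Px Py)) => [Qxy | Rxy].
- by apply: nQx; rewrite -(addrK y x); apply: QB.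
- by apply: nRy; rewrite -(addKr x y) addrC; apply: RB.
Qed.

Section LiesAbove.
Context {d p : nat}.
Hypothesis p_prime : prime p.

Lemma idealB {P : algC -> Prop} {x y : algC} :
  ideal_of_O d P -> P x -> P y -> P (x - y).
Proof.
case=> _ _ PD PM Px Py; apply: PD => //.
by rewrite -mulN1r; apply: PM => //; rewrite -(rmorphN1 intr); apply: inO_int.
Qed.

Lemma ideal_dvdz {P : algC -> Prop} {n : int} :
  ideal_of_O d P -> P p%:R -> (p %| n)%Z -> P n%:~R.
Proof.
case=> _ _ _ PM Pp /dvdzP[k ->].
by rewrite intrM -pmulrn; apply: PM => //; apply: inO_int.
Qed.

Lemma lies_above_dvdz {P : algC -> Prop} {n : int} :
  lies_above d p P -> P n%:~R -> (p %| n)%Z.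
Proof.
move=> [[[_ _ PD PM] P1 _] Pp] Pn.
apply/idPn => p_ndvd_n; apply: P1.
have [u [v uv_eq]] := Bezoutz n p.
have /eqP gcd_np : coprimez n p by rewrite coprimezE coprime_sym prime_coprime.
rewrite -[1]/(1%:~R : algC) -gcd_np -uv_eq intrD !intrM -pmulrn.
by apply: PD; apply: PM => //; apply: inO_int.
Qed.

Lemma lies_above_int {P Q : algC -> Prop} {n : algC} :
  lies_above d p P -> lies_above d p Q -> n \in Num.int -> P n -> Q n.
Proof.
move=> abP [[QI _ _] Qp] /intrP[k ->] /(lies_above_dvdz abP).
exact: ideal_dvdz.
Qed.

Lemma lies_above_conj {P : algC -> Prop} :
  lies_above d p P -> lies_above d p (conj_set P).
Proof.
rewrite /conj_set => -[[[PO P0 PD PM] P1 Pprime] Pp].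
split; last by rewrite conjC_nat.
split; rewrite ?conjC1 //; last first.
  by move=> a b /inO_conj Oa /inO_conj Ob; rewrite rmorphM; apply: Pprime.
split; rewrite ?conjC0 //.
- by move=> x /PO /inO_conj; rewrite conjCK.
- by move=> x y Px Py; rewrite rmorphD; apply: PD.
- by move=> a x /inO_conj Oa Px; rewrite rmorphM; apply: PM.
Qed.

Lemma lies_above_sub_or_conj {P Q : algC -> Prop} {x : algC} :
  lies_above d p P -> lies_above d p Q -> P x -> Q x \/ Q x^*.
Proof.
move=> abP abQ Px; have [[[PO _ _ PM] _ _] _] := abP.
have Ox := PO x Px; have /inO_conj Ocx := Ox.
have Pnx : P (x * x^*) by rewrite mulrC; apply: PM.
have [[_ _ Qprime] _] := abQ.
by apply: Qprime => //; apply: (lies_above_int abP abQ (inO_norm_int Ox)).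
Qed.

Lemma lies_above_sub_sym {P Q : algC -> Prop} :
  lies_above d p P -> lies_above d p Q ->
  (forall x, P x -> Q x) -> forall x, Q x -> P x.
Proof.
move=> abP abQ PQ x Qx; have [[QI _ _] _] := abQ; have [[PI _ _] _] := abP.
have Ox : inO d x by case: QI => + _ _ _; apply.
have [// | Qcx] := lies_above_sub_or_conj abQ abP Qx.
have Qtx : Q (x + x^*) by case: QI => _ _ QD _; apply: QD => //; apply: PQ.
have Ptx := lies_above_int abQ abP (inO_trace_int Ox) Qtx.
by rewrite -(addrK x^* x); apply: idealB.
Qed.

Lemma lies_above_eq_or_conj {P Q : algC -> Prop} :
  lies_above d p P -> lies_above d p Q -> same_set P Q \/ same_set Q (conj_set P).
Proof.
move=> abP abQ; have abcQ := lies_above_conj abQ.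
have [[[_ _ PD _] _ _] _] := abP.
have [[QI _ _] _] := abQ; have [[cQI _ _] _] := abcQ.
have [PQ | PcQ] := sub_or_of_sub_union PD (fun x y => idealB QI) (fun x y => idealB cQI)
  (fun x Px => lies_above_sub_or_conj abP abQ Px).
- by left=> x; split; [apply: PQ | apply: lies_above_sub_sym abP abQ PQ x].
- right=> x; rewrite /conj_set; split=> [Qx | Pcx]; last by rewrite -[x]conjCK; apply: PcQ.
  by apply: (lies_above_sub_sym abP abcQ PcQ); rewrite /conj_set conjCK.
Qed.

End LiesAbove.

Lemma conj_hL (p r : nat) (x y : algC) : (hL p r x y)^* = hL p r x^* y^*.
Proof. by rewrite /hL !rmorphM fmorphV !rmorph_nat. Qed.

Section ConjugateLattice.
Context {d p r : nat} {P Q : algC -> Prop}.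
Hypothesis Q_conjP : same_set Q (conj_set P).

Lemma represented_by_I_conj (m : nat) :
  represented_by_I d p r m P -> represented_by_I d p r m Q.
Proof.
case=> f [fO f_lin f_inj f_h].
exists (fun x i => (f x^* i)^*); split.
- by move=> x /Q_conjP Px i; apply/inO_conj/fO.
- move=> a x y Oa /Q_conjP Px /Q_conjP Py.
  rewrite rmorphD rmorphM f_lin //; last exact: inO_conj.
  by apply: functional_extensionality => i; rewrite rmorphD rmorphM /= conjCK.
- move=> x y /Q_conjP Px /Q_conjP Py fxy.
  rewrite -[x]conjCK -[y]conjCK; congr (_^*); apply: f_inj => //.
  apply: functional_extensionality => i.
  by rewrite -[f x^* i]conjCK -[f y^* i]conjCK (congr1 (fun g => g i) fxy).
- move=> x y /Q_conjP Px /Q_conjP Py.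
  rewrite -[hL p r x y]conjCK conj_hL -f_h // /hI rmorph_sum.
  by apply: eq_bigr => i _; rewrite rmorphM /= conjCK.
Qed.

Lemma in_S1_conj : in_S1 d p r P -> in_S1 d p r Q.
Proof.
case=> -[hL_pos hL_int] [m [m_gt0 repP]]; split; last first.
  by exists m; split; last exact: represented_by_I_conj.
split=> [x /Q_conjP Px x_neq0 | x y /Q_conjP Px /Q_conjP Py].
- have -> : hL p r x x = hL p r x^* x^* by rewrite /hL conjCK [x * _]mulrC.
  by apply: hL_pos; rewrite ?conjC_eq0.
- by rewrite -[hL p r x y]conjCK conj_hL; apply/inO_conj/hL_int.
Qed.

End ConjugateLattice.

Theorem lemma2 (d p : nat) (P1 P2 : algC -> Prop) :
  (0 < d)%N -> squarefree d -> prime p -> splits d p ->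
  lies_above d p P1 -> lies_above d p P2 -> ~ same_set P1 P2 ->
  (forall r m : nat, (0 < r)%N -> (0 < m)%N ->
     represented_by_I d p r m P1 <-> represented_by_I d p r m P2) /\
  (forall r : nat, (0 < r)%N -> in_S1 d p r P1 <-> in_S1 d p r P2).
Proof.
move=> _ _ p_prime _ abP1 abP2 P1_neq_P2.
have [// | P2_conjP1] := lies_above_eq_or_conj p_prime abP1 abP2.
have P1_conjP2 : same_set P1 (conj_set P2).
  by move=> x; rewrite /conj_set P2_conjP1 /conj_set conjCK.
split=> r *.
- by split; apply: represented_by_I_conj.
- by split; apply: in_S1_conj.
Qed.
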